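(* Let $\mathfrak{G}$ be a non-redundant assembly graph and $\mathfrak{C}=\mathrm{CPC}(\mathfrak{G})$. Then the following finite strings are conductors for $\mathfrak{C}$: (i) any superstring of a conductor for $\mathfrak{C}$; (ii) any vertex, edge, or walk label in $\mathfrak{G}$; (iii) any string that is not a substring of $\mathfrak{C}$; (iv) any string that is at least as long as the longest edge label in $\mathfrak{G}$.
   Context: All strings are over a fixed finite alphabet $\Sigma$. A cyclic string is a bi-infinite periodic word $\mathbb{Z}\to\Sigma$, considered up to shifting indices; for a nonempty finite string $x$, $\langle x\rangle$ is the cyclic string repeating $x$ in both directions. A chromosome-set is a set of cyclic strings; a finite string is a substring of a chromosome-set if it is a contiguous block of one of its elements. A string $u$ is a proper infix of $w$ if $w=aub$ with $a,b$ nonempty. An abstract assembly graph is a finite directed multigraph in which each vertex and edge carries a label (a finite or cyclic string) such that for every edge $e$ from $u$ to $v$, $Label(u)$ is a prefix and $Label(v)$ a suffix of $Label(e)$. An edge $e$ from $u$ to $v$ is a prefix edge if $Label(e)=Label(v)$, a suffix edge if $Label(e)=Label(u)$. An assembly graph is an abstract assembly graph in which every vertex and edge lies on a directed cycle and no edge is both a prefix and a suffix edge. The label of a walk $v_0,e_1,\dots,e_n,v_n$ is $Label(e_1)$ followed, for $i\ge 2$, by $Label(e_i)$ with its first $|Label(v_{i-1})|$ characters removed; a walk with no edges has its vertex label. A circuit is a primitive closed walk up to rotation; if its walk label is $Label(v_0)x$, its label is $\langle x\rangle$. $\mathrm{CPC}(\mathfrak{G})$ is the set of circuit labels of $\mathfrak{G}$.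 $P$ is an inner subwalk of $Q$ if $Q=APB$ with walks $A,B$ each having at least one edge. The graph is non-redundant if whenever $Label(P)$ is a proper infix of $Label(Q)$ for walks $P,Q$, $P$ is an inner subwalk of $Q$. A finite string $v$ is a conductor for a chromosome-set $\mathfrak{C}$ if for all nonempty finite strings $a,b$ such that $va$ and $vb$ both end with $v$ (i.e. $va=a'v$, $vb=b'v$ for some $a',b'$), we have $\langle ab\rangle\in\mathfrak{C}$ if and only if $\langle a\rangle\in\mathfrak{C}$ and $\langle b\rangle\in\mathfrak{C}$. *)

From HB Require Import structures.
From mathcomp Require Import all_boot all_order all_algebra.
Set Implicit Arguments. Unset Strict Implicit. Unset Printing Implicit Defensive.
Import GRing.Theory Num.Theory.

(* A cyclic string is a bi-infinite word int -> S considered up to shift.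
   A chromosome-set is a predicate on bi-infinite words; membership of a
   cyclic string is always tested up to shift (see [cmem]). *)

Definition is_cyc (S : Type) (c : int -> S) (x : seq S) : Prop :=
  (0 < size x)%N /\
  exists k : int, forall i : int,
    c (i + k)%R = nth (c 0%R) x (absz (i %% (size x)%:Z)%Z).

Definition cmem (S : Type) (C : (int -> S) -> Prop) (x : seq S) : Prop :=
  exists c, C c /\ is_cyc c x.

Definition substr_of (S : Type) (C : (int -> S) -> Prop) (s : seq S) : Prop :=
  exists c, C c /\ exists i : int, forall j : nat, (j < size s)%N ->
    c (i + j%:Z)%R = nth (c 0%R) s j.

Definition conductor (S : eqType) (C : (int -> S) -> Prop) (v : seq S) : Prop :=
  forall a b : seq S, a != [::] -> b != [::] ->
    (exists a', v ++ a = a' ++ v) -> (exists b', v ++ b = b' ++ v) ->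
    (cmem C (a ++ b) <-> (cmem C a /\ cmem C b)).

Record lgraph (S : Type) := LGraph {
  gV : finType;
  gE : finType;
  gsrc : gE -> gV;
  gtgt : gE -> gV;
  vlab : gV -> seq S;
  elab : gE -> seq S }.

Section Graphs.
Variables (S : eqType) (G : lgraph S).

(* a walk v0, e1, ..., en is given by its start vertex and its edge sequence *)
Fixpoint walk_ok (v : gV G) (es : seq (gE G)) : bool :=
  match es with
  | [::] => true
  | e :: es' => (gsrc e == v) && walk_ok (gtgt e) es'
  end.

Definition wend (v : gV G) (es : seq (gE G)) : gV G :=
  last v [seq gtgt e | e <- es].

Definition wlabel (v : gV G) (es : seq (gE G)) : seq S :=
  match es with
  | [::] => vlab v
  | e :: es' => elab e ++ flatten [seq drop (size (vlab (gsrc f))) (elab f) | f <- es']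
  end.

Definition closed_walk (v : gV G) (es : seq (gE G)) : Prop :=
  es != [::] /\ walk_ok v es /\ wend v es = v.

Definition abstract_assembly_graph : Prop :=
  forall e : gE G, prefix (vlab (gsrc e)) (elab e) /\ suffix (vlab (gtgt e)) (elab e).

Definition prefix_edge (e : gE G) : Prop := elab e = vlab (gtgt e).
Definition suffix_edge (e : gE G) : Prop := elab e = vlab (gsrc e).

Definition assembly_graph : Prop :=
  abstract_assembly_graph /\
  (forall v : gV G, exists es, closed_walk v es) /\
  (forall e : gE G, exists v es, closed_walk v es /\ e \in es) /\
  (forall e : gE G, ~ (prefix_edge e /\ suffix_edge e)).

Definition primitive_seq (T : Type) (s : seq T) : Prop :=
  forall (k : nat) (t : seq T), flatten (nseq k t) = s -> (k <= 1)%N.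

Definition circuit (v : gV G) (es : seq (gE G)) : Prop :=
  closed_walk v es /\ primitive_seq es.

Definition CPC : (int -> S) -> Prop :=
  fun c => exists v es x, circuit v es /\ wlabel v es = vlab v ++ x /\ is_cyc c x.

Definition inner_subwalk (p : gV G) (ps : seq (gE G)) (q : gV G) (qs : seq (gE G)) : Prop :=
  exists as_ bs, as_ != [::] /\ bs != [::] /\ qs = as_ ++ ps ++ bs /\ wend q as_ = p.

Definition proper_infix (u w : seq S) : Prop :=
  exists a b, a != [::] /\ b != [::] /\ w = a ++ u ++ b.

Definition non_redundant : Prop :=
  forall p ps q qs, walk_ok p ps -> walk_ok q qs ->
    proper_infix (wlabel p ps) (wlabel q qs) -> inner_subwalk p ps q qs.

Definition max_edge_label : nat := \max_(e : gE G) size (elab e).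

End Graphs.

(* Write the label of a walk from [p] as [vlab p ++ wpost ps], and let [wpre D]
   be the label of a walk [D] with its final vertex label removed.  If [w] is a
   walk label and [w ++ a = a' ++ w], then [<a>] is a circuit label iff [a'] is
   [wpre D] for a closed walk [D] at the start of [w]: closed walks give
   circuits (through a primitive root of [D]) whose labels are conjugate to
   [a']; conversely, a long power of [a] contains [w ++ a] and lies strictly
   inside some walk label, where non-redundancy forces both occurrences of [w]
   to be occurrences of the walk itself, joined by such a [D].  Since closed
   walks at a vertex concatenate, and an occurrence of [w ++ a ++ b] contains
   one of [w ++ a] and one of [w ++ b], every walk label is a conductor.
   Superstrings of conductors are conductors because conjugation preserves
   cyclic strings; strings that are no substring are conductors vacuously; and
   a substring at least as long as every edge label contains a vertex label. *)

From mathcomp Require Import all_boot all_order all_algebra.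
From mathcomp Require Import zify.
From Stdlib Require Import Classical.
Set Implicit Arguments. Unset Strict Implicit. Unset Printing Implicit Defensive.
Import GRing.Theory Num.Theory.

Notation catn s n := (flatten (nseq n s)).

Section Words.
Variable S : eqType.
Implicit Types (s t u v w x y z : seq S).

Lemma cat_injr s : injective (cat s).
Proof. by move=> t1 t2 /(congr1 (drop (size s))); rewrite !drop_size_cat. Qed.

Lemma cat_neq0l s t : s != [::] -> s ++ t != [::].
Proof. by case: s. Qed.

Lemma cat_neq0r s t : t != [::] -> s ++ t != [::].
Proof. by case: s. Qed.

Lemma cat_eq_sizel s1 s2 s3 s4 :
  s1 ++ s3 = s2 ++ s4 -> size s1 = size s2 -> s1 = s2 /\ s3 = s4.
Proof. by move=> /eqP + eq12; rewrite eqseq_cat // => /andP[/eqP ? /eqP ?]. Qed.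

Lemma cat_eq_sizer s1 s2 s3 s4 :
  s1 ++ s3 = s2 ++ s4 -> size s3 = size s4 -> s1 = s2 /\ s3 = s4.
Proof.
move=> E eq34; apply: cat_eq_sizel => //.
by have := congr1 size E; rewrite !size_cat eq34; lia.
Qed.

Lemma cat_eq_cat_leq s1 s2 t1 t2 : s1 ++ s2 = t1 ++ t2 -> size s1 <= size t1 ->
  exists r, t1 = s1 ++ r /\ s2 = r ++ t2.
Proof.
move=> E le1; have take1 : take (size s1) t1 = s1.
  by rewrite -(takel_cat t2 le1) -E take_size_cat.
exists (drop (size s1) t1); split; first by rewrite -{1}(cat_take_drop (size s1) t1) take1.
by apply: (@cat_injr s1); rewrite E catA -{1}take1 cat_take_drop.
Qed.

Lemma conj_size u v z : u ++ z = z ++ v -> size u = size v.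
Proof. by move=> /(congr1 size); rewrite !size_cat; lia. Qed.

Lemma catn_nil n : catn ([::] : seq S) n = [::].
Proof. by elim: n. Qed.

Lemma size_catn s n : size (catn s n) = n * size s.
Proof. by elim: n => //= n IH; rewrite size_cat IH mulSn. Qed.

Lemma catnSr s n : catn s n.+1 = catn s n ++ s.
Proof. by elim: n => [|n IH]; rewrite /= ?cats0 // -catA -IH. Qed.

Lemma catnD s m n : catn s (m + n) = catn s m ++ catn s n.
Proof. by rewrite nseqD flatten_cat. Qed.

Lemma catnM s m n : catn (catn s n) m = catn s (m * n).
Proof. by elim: m => //= m IH; rewrite IH mulSn catnD. Qed.

Lemma nth_catn d s n i : i < n * size s -> nth d (catn s n) i = nth d s (i %% size s).
Proof.
elim: n i => [|n IH] i //=; rewrite mulSn nth_cat => lt_i.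
case: ltnP => le_si; first by rewrite modn_small.
by rewrite IH; [rewrite -{2}(subnKC le_si) modnDl | lia].
Qed.

Lemma catn_conj u v z n : u ++ z = z ++ v -> catn u n ++ z = z ++ catn v n.
Proof. by move=> E; elim: n => [|n IH] /=; rewrite ?cats0 // -catA IH catA E catA. Qed.

Lemma catn_suffix w y y' : w ++ y = y' ++ w -> 0 < size y ->
  exists g, catn y (size w) = g ++ w.
Proof.
move=> E y_gt0; have E' := catn_conj (size w) (esym E).
set Y := catn y (size w) in E' *; set k := size Y - size w.
have le_w : size w <= size Y by rewrite /Y size_catn; nia.
exists (take k Y); rewrite -{1}(cat_take_drop k Y); congr (_ ++ _).
have [] // := @cat_eq_sizer (catn y' (size w)) (w ++ take k Y) w (drop k Y).
  by rewrite E' -catA cat_take_drop.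
by rewrite size_drop; lia.
Qed.

Lemma modz_absz (i : int) (L : nat) : 0 < L ->
  absz (i %% Posz L)%Z < L /\ Posz (absz (i %% Posz L)%Z) = (i %% Posz L)%Z.
Proof.
move=> L_gt0; have ge0 : (0 <= i %% Posz L)%Z%R by apply: modz_ge0; rewrite eqz_nat; lia.
have lt : (i %% Posz L < Posz L)%Z%R by apply: ltz_pmod; rewrite ltz_nat.
by rewrite gez0_abs // -ltz_nat gez0_abs.
Qed.

(* [cycw (c 0) x] is the right-hand side of [is_cyc c x]; the default [d] is
   irrelevant as soon as [x] is nonempty. *)
Definition cycw (d : S) x (i : int) : S := nth d x (absz (i %% Posz (size x))%Z).

Lemma cycw_default d d' x i : 0 < size x -> cycw d x i = cycw d' x i.
Proof. by move=> x_gt0; apply: set_nth_default; case: (modz_absz i x_gt0). Qed.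

Lemma cycw_nat d x (j : nat) : cycw d x (Posz j) = nth d x (j %% size x).
Proof. by rewrite /cycw modz_nat absz_nat. Qed.

Lemma cycwDn d x (K : int) (j : nat) : 0 < size x ->
  cycw d x (K + Posz j)%R = nth d x ((absz (K %% Posz (size x))%Z + j) %% size x).
Proof.
move=> x_gt0; rewrite /cycw; congr nth; case: (modz_absz K x_gt0) => _ E.
by rewrite -modzDml -E -PoszD modz_nat absz_nat.
Qed.

Lemma cycw_catn d t k i : 0 < k -> 0 < size t -> cycw d (catn t k) i = cycw d t i.
Proof.
move=> k_gt0 t_gt0; rewrite /cycw size_catn.
have kt_gt0 : 0 < k * size t by rewrite muln_gt0 k_gt0.
case: (modz_absz i kt_gt0) => lt E.
rewrite nth_catn // -[(_ %% size t)%N]absz_nat -modz_nat E.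
by rewrite {2}(divz_eq i (Posz (k * size t))) PoszM mulrA modzMDl.
Qed.

Definition same_cyc x y := exists m : int, forall d i, cycw d x (i + m)%R = cycw d y i.

Lemma same_cyc_sym x y : same_cyc x y -> same_cyc y x.
Proof. by case=> m E; exists (- m)%R => d i; rewrite -E subrK. Qed.

Lemma same_cyc_catn t k : 0 < k -> 0 < size t -> same_cyc (catn t k) t.
Proof. by move=> k_gt0 t_gt0; exists 0%R => d i; rewrite addr0 cycw_catn. Qed.

Lemma nth_conj d u v z r : u ++ z = z ++ v -> r < size v ->
  nth d u ((r + size z) %% size u) = nth d v r.
Proof.
move=> E lt_r; have su := conj_size E.
have E' := congr1 (nth d ^~ (size z + r)) (catn_conj (size z).+1 E).
rewrite nth_cat size_catn ifT in E'; last by rewrite su; nia.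
rewrite nth_catn in E'; last by rewrite su; nia.
rewrite nth_cat ifF ?addKn in E'; last by lia.
by rewrite nth_catn in E'; [rewrite addnC E' modn_small | nia].
Qed.

Lemma same_cyc_conj u v z : u ++ z = z ++ v -> 0 < size u -> same_cyc u v.
Proof.
move=> E u_gt0; have su := conj_size E.
exists (Posz (size z)) => d i; rewrite cycwDn // /cycw -su.
by apply: nth_conj => //; rewrite -su; case: (modz_absz i u_gt0).
Qed.

Lemma is_cyc_cycw d x : 0 < size x -> is_cyc (cycw d x) x.
Proof. by move=> x_gt0; split=> //; exists 0%R => i; rewrite addr0; apply: cycw_default. Qed.

Lemma cycw_window_infix d x s (i0 : int) : 0 < size x ->
  (forall j, j < size s -> cycw d x (i0 + Posz j)%R = nth d s j) ->
  exists N A B, [/\ A != [::], B != [::] & catn x N = A ++ s ++ B].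
Proof.
move=> x_gt0 Es; set L := size x; set m := absz (i0 %% Posz L)%Z + L.
set N := m + size s + 1; set P := catn x N.
have sP : size P = N * L by rewrite size_catn.
have NL : N <= N * L by rewrite leq_pmulr.
have Es' : s = take (size s) (drop m P).
  apply: (@eq_from_nth _ d) => [|j lt_j]; first by rewrite size_takel // size_drop sP; lia.
  rewrite nth_take // nth_drop -Es // cycwDn // nth_catn; last by rewrite -/L; lia.
  by rewrite /m addnAC modnDr.
exists N, (take m P), (drop (m + size s) P); split.
- by rewrite -size_eq0 -lt0n size_takel ?sP; lia.
- by rewrite -size_eq0 -lt0n size_drop sP; lia.
rewrite addnC -drop_drop -/P -{1}(cat_take_drop m P).
by rewrite -{1}(cat_take_drop (size s) (drop m P)) -Es'.
Qed.

Lemma catnS_suffix w y y' : w ++ y = y' ++ w -> 0 < size y ->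
  exists g, catn y (size w).+1 = g ++ w ++ y.
Proof. by move=> E /(catn_suffix E)[g Eg]; exists g; rewrite catnSr Eg catA. Qed.

Lemma conj_infix p v q x x' : (p ++ v ++ q) ++ x = x' ++ p ++ v ++ q ->
  exists2 x3, q ++ x = x3 ++ q & exists x4, v ++ x3 = x4 ++ v.
Proof.
rewrite -!catA => E; have le_p : size p <= size (x' ++ p) by rewrite size_cat leq_addl.
have [x2 [_ E2]] := cat_eq_cat_leq (etrans E (catA _ _ _)) le_p.
have le_v : size v <= size (x2 ++ v) by rewrite size_cat leq_addl.
have [x3 [Ex2 Ex3]] := cat_eq_cat_leq (etrans E2 (catA _ _ _)) le_v.
by exists x3 => //; exists x2.
Qed.

Section Membership.
Variable C : (int -> S) -> Prop.

Lemma cmem_same_cyc x y : 0 < size y -> same_cyc x y -> cmem C x -> cmem C y.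
Proof.
move=> y_gt0 [m E] [c [Cc [_ [k Ek]]]]; exists c; split => //; split => //.
by exists (m + k)%R => i; rewrite addrA Ek; apply: E.
Qed.

Lemma cmem_conj u v z : u ++ z = z ++ v -> 0 < size u -> cmem C u <-> cmem C v.
Proof.
move=> E u_gt0; have v_gt0 : 0 < size v by rewrite -(conj_size E).
have uv := same_cyc_conj E u_gt0.
by split; [apply: cmem_same_cyc uv | apply: cmem_same_cyc (same_cyc_sym uv)].
Qed.

Lemma substr_of_conj s a a' : s ++ a = a' ++ s -> cmem C a -> substr_of C s.
Proof.
move=> E [c [Cc [a_gt0 [k Ek]]]]; have [g Eg] := catn_suffix E a_gt0.
have sz : size g + size s = size s * size a by rewrite -size_catn Eg size_cat.
exists c; split => //; exists (k + Posz (size g))%R => j lt_j.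
have -> : (k + Posz (size g) + Posz j = Posz (size g + j) + k)%R by lia.
rewrite Ek -/(cycw (c 0%R) a (Posz (size g + j))) cycw_nat -(@nth_catn _ _ (size s)); last by lia.
by rewrite Eg nth_cat ltnNge leq_addr /= addKn.
Qed.

Lemma conductor_infix v w : conductor C v -> infix v w -> conductor C w.
Proof.
move=> Cv /infixP[p [q ->]] a b a_neq0 b_neq0.
move=> [a' /conj_infix[a3 Ea3 Ea4]] [b' /conj_infix[b3 Eb3 Eb4]].
have a3_gt0 : 0 < size a3 by rewrite (conj_size (esym Ea3)) lt0n size_eq0.
have b3_gt0 : 0 < size b3 by rewrite (conj_size (esym Eb3)) lt0n size_eq0.
have ab3_gt0 : 0 < size (a3 ++ b3) by rewrite size_cat addn_gt0 a3_gt0.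
have Eab : (a3 ++ b3) ++ q = q ++ a ++ b by rewrite -catA -Eb3 catA -Ea3 catA.
rewrite -(cmem_conj Eab ab3_gt0) -(cmem_conj (esym Ea3) a3_gt0) -(cmem_conj (esym Eb3) b3_gt0).
by apply: Cv => //; rewrite -size_eq0 -lt0n.
Qed.

Lemma conductor_nosubstr s : ~ substr_of C s -> conductor C s.
Proof.
move=> not_sub a b a_neq0 _ [a' Ea] [b' Eb]; split=> [Cab | [Ca _]]; exfalso; apply: not_sub.
  by apply: (substr_of_conj (a' := a' ++ b')) Cab; rewrite catA Ea -catA Eb catA.
exact: substr_of_conj Ea Ca.
Qed.

End Membership.

End Words.

Lemma exists_primitive_root (T : eqType) (s : seq T) : s != [::] ->
  exists t k, [/\ 0 < k, s = catn t k, primitive_seq t & t != [::]].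
Proof.
have [n] := ubnP (size s); elim: n s => // n IH s lt_s s_neq0.
case: (classic (exists k t, catn t k = s /\ 1 < k)) => [[k [t [Es k_gt1]]] | not_pow].
  have t_neq0 : t != [::] by apply: contra_neq s_neq0 => t0; rewrite -Es t0 catn_nil.
  have lt_t : size t < n.
    have : 0 < size t by rewrite lt0n size_eq0.
    by move: lt_s; rewrite -Es size_catn; nia.
  have [t0 [k0 [k0_gt0 Et Hp t0_neq0]]] := IH t lt_t t_neq0.
  exists t0, (k * k0); split => //; first by rewrite muln_gt0 k0_gt0; lia.
  by rewrite -Es Et catnM.
exists s, 1; split => //=; first by rewrite cats0.
by move=> k t Es; rewrite leqNgt; apply/negP => k_gt1; apply: not_pow; exists k, t.
Qed.

Section WalkLabels.
Variables (S : eqType) (G : lgraph S).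
Hypothesis AG : abstract_assembly_graph G.
Implicit Types (p q v : gV G) (e : gE G) (es ps qs t D : seq (gE G)).

Definition epre e := take (size (elab e) - size (vlab (gtgt e))) (elab e).
Definition epost e := drop (size (vlab (gsrc e))) (elab e).
Definition wpre es := flatten (map epre es).
Definition wpost es := flatten (map epost es).

Lemma elab_src e : elab e = vlab (gsrc e) ++ epost e.
Proof. by case: (AG e) => /prefixP[r E] _; rewrite /epost E drop_size_cat. Qed.

Lemma elab_tgt e : elab e = epre e ++ vlab (gtgt e).
Proof. by case: (AG e) => _ /suffixP[r E]; rewrite /epre {2 3}E size_cat addnK take_size_cat. Qed.

Lemma wpre_cat es1 es2 : wpre (es1 ++ es2) = wpre es1 ++ wpre es2.
Proof. by rewrite /wpre map_cat flatten_cat. Qed.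

Lemma wpost_cat es1 es2 : wpost (es1 ++ es2) = wpost es1 ++ wpost es2.
Proof. by rewrite /wpost map_cat flatten_cat. Qed.

Lemma wpost_rcons es e : wpost (rcons es e) = wpost es ++ epost e.
Proof. by rewrite -cats1 wpost_cat /wpost /= cats0. Qed.

Lemma wpre_catn t k : wpre (catn t k) = catn (wpre t) k.
Proof. by elim: k => //= k IH; rewrite wpre_cat IH. Qed.

Lemma wpost_catn t k : wpost (catn t k) = catn (wpost t) k.
Proof. by elim: k => //= k IH; rewrite wpost_cat IH. Qed.

Lemma walk_ok_cat v es1 es2 :
  walk_ok v (es1 ++ es2) = walk_ok v es1 && walk_ok (wend v es1) es2.
Proof. by elim: es1 v => //= e es1 IH v; rewrite IH andbA. Qed.

Lemma wend_cat v es1 es2 : wend v (es1 ++ es2) = wend (wend v es1) es2.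
Proof. by rewrite /wend map_cat last_cat. Qed.

Lemma wlabelE v es : walk_ok v es -> wlabel v es = vlab v ++ wpost es.
Proof.
by case: es => [|e es] /=; [rewrite cats0 | case/andP=> /eqP <- _; rewrite catA -elab_src].
Qed.

Lemma wlabel_wpre v es : walk_ok v es -> vlab v ++ wpost es = wpre es ++ vlab (wend v es).
Proof.
elim: es v => [|e es IH] v /=; first by rewrite cats0.
by case/andP=> /eqP <- ok_es; rewrite catA -elab_src elab_tgt -catA IH // catA.
Qed.

Lemma wlabel_cons v e es : walk_ok v (e :: es) ->
  vlab v ++ wpost (e :: es) = epre e ++ vlab (gtgt e) ++ wpost es.
Proof. by case/andP=> /eqP <- _; rewrite /wpost /= catA -elab_src elab_tgt catA. Qed.

Lemma closed_walk_cat p D D' : closed_walk p D -> closed_walk p D' -> closed_walk p (D ++ D').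
Proof.
move=> [D_neq0 [okD endD]] [_ [okD' endD']]; split; first exact: cat_neq0l.
by rewrite walk_ok_cat wend_cat endD okD okD'.
Qed.

Lemma walk_ok_catn p t n : walk_ok p t -> wend p t = p -> walk_ok p (catn t n).
Proof.
move=> ok_t end_t; suff : walk_ok p (catn t n) /\ wend p (catn t n) = p by case.
by elim: n => [|n [IH1 IH2]] //=; rewrite walk_ok_cat wend_cat end_t ok_t IH1 IH2.
Qed.

Lemma closed_walk_root p t k : t != [::] -> 0 < k -> closed_walk p (catn t k) -> closed_walk p t.
Proof.
case: k => // k t_neq0 _ [_]; rewrite [catn t _]/= walk_ok_cat wend_cat.
case=> /andP[ok_t ok_tk] end_tk; split=> //; split=> //.
case: k ok_tk end_tk => [|k] ok_tk end_tk; first exact: end_tk.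
(* the second copy of [t] starts both at [p] and at [wend p t] *)
by case: t t_neq0 ok_t ok_tk {end_tk} => // e t _ /= /andP[/eqP <- _] /andP[/eqP <- _].
Qed.

Lemma cmem_circuit p t : circuit p t -> 0 < size (wpost t) -> cmem (CPC G) (wpost t).
Proof.
move=> circ_t post_gt0; case Epost: (wpost t) (post_gt0) => [//|d x] _; rewrite -Epost.
exists (cycw d (wpost t)); split; last exact: is_cyc_cycw.
exists p, t, (wpost t); split=> //; split; last exact: is_cyc_cycw.
by case: circ_t => -[_ [ok_t _]] _; rewrite wlabelE.
Qed.

Lemma cmem_closed_walk p D z y :
  closed_walk p D -> wpre D ++ z = z ++ y -> 0 < size y -> cmem (CPC G) y.
Proof.
move=> cl_D E y_gt0; have [D_neq0 _] := cl_D.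
have [t [k [k_gt0 ED prim_t t_neq0]]] := exists_primitive_root D_neq0.
have cl_t : closed_walk p t by apply: closed_walk_root t_neq0 k_gt0 _; rewrite -ED.
have Et : wpre t ++ vlab p = vlab p ++ wpost t.
  by case: cl_t => _ [ok_t end_t]; rewrite wlabel_wpre // end_t.
have EDk : wpre D = catn (wpre t) k by rewrite ED wpre_catn.
have pre_gt0 : 0 < size (wpre t).
  by move: y_gt0; rewrite -(conj_size E) EDk size_catn; nia.
have Cpre : cmem (CPC G) (wpre t).
  rewrite (cmem_conj (CPC G) Et pre_gt0); apply: (@cmem_circuit p).
    by split.
  by rewrite -(conj_size Et).
have D_gt0 : 0 < size (wpre D) by rewrite (conj_size E).
rewrite -(cmem_conj (CPC G) E D_gt0) EDk.
by apply: cmem_same_cyc (same_cyc_sym (same_cyc_catn k_gt0 pre_gt0)) Cpre; rewrite -EDk.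
Qed.

Definition walk_inner_infix (s : seq S) := exists q qs (A B : seq S),
  [/\ walk_ok q qs, A != [::], B != [::] & vlab q ++ wpost qs = A ++ s ++ B].

Lemma CPC_substr_inner c s (i0 : int) : CPC G c ->
  (forall j, j < size s -> c (i0 + Posz j)%R = nth (c 0%R) s j) -> walk_inner_infix s.
Proof.
move=> [p [t [x [[[_ [ok_t end_t]] _] [lab_t [x_gt0 [k Ek]]]]]]] Es.
have Ex : wpost t = x by move: lab_t; rewrite wlabelE // => /cat_injr.
have [|N [A [B [A_neq0 B_neq0 EN]]]] := @cycw_window_infix _ (c 0%R) x s (i0 - k)%R x_gt0.
  by move=> j lt_j; rewrite -Es // (_ : (i0 + Posz j = i0 - k + Posz j + k)%R) ?Ek //; lia.
exists p, (catn t N), (vlab p ++ A), B; split=> //; first exact: walk_ok_catn.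
  exact: cat_neq0r.
by rewrite wpost_catn Ex EN catA.
Qed.

Lemma cmem_catn_inner y n : cmem (CPC G) y -> walk_inner_infix (catn y n).
Proof.
move=> [c [Cc [y_gt0 [k Ek]]]]; apply: (CPC_substr_inner (i0 := k) Cc) => j.
rewrite size_catn => lt_j; rewrite addrC Ek -/(cycw (c 0%R) y (Posz j)) cycw_nat nth_catn //.
Qed.

Lemma wlabel_infix_vlab q qs (A B s : seq S) :
  walk_ok q qs -> vlab q ++ wpost qs = A ++ s ++ B ->
  (forall v, size (vlab v) <= size s) -> (forall e, size (elab e) <= size s) ->
  exists v, infix (vlab v) s.
Proof.
move=> + + le_v le_e; elim: qs q A => [|e qs IH] q A ok_q E.
  rewrite [wpost _]/= cats0 in E.
  have [A0 B0] : A = [::] /\ B = [::].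
    by split; apply/eqP; rewrite -size_eq0; have := le_v q; rewrite E !size_cat; lia.
  by exists q; rewrite E A0 B0 cats0 infix_refl.
rewrite wlabel_cons // in E; case/andP: ok_q => _ ok_qs.
case: (leqP (size (epre e)) (size A)) => [le_A | lt_A].
  by have [r [_ Er]] := cat_eq_cat_leq E le_A; apply: IH ok_qs Er.
have [r [Epre Es]] := cat_eq_cat_leq (esym E) (ltnW lt_A).
have le_rv : size (r ++ vlab (gtgt e)) <= size s.
  by have := le_e e; rewrite elab_tgt Epre !size_cat; lia.
have [r' [Es' _]] := cat_eq_cat_leq (esym (etrans Es (catA _ _ _))) le_rv.
by exists (gtgt e); apply/infixP; exists r, r'; rewrite Es' -catA.
Qed.

Lemma wlabel_behead q e qs (A X : seq S) : walk_ok q (e :: qs) ->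
  vlab q ++ wpost (e :: qs) = A ++ X -> size (epre e) < size A ->
  exists2 r, A = epre e ++ r &
    [/\ r != [::], walk_ok (gtgt e) qs & vlab (gtgt e) ++ wpost qs = r ++ X].
Proof.
move=> ok_q; rewrite wlabel_cons // => E lt_eA.
have [r [EA Er]] := cat_eq_cat_leq E (ltnW lt_eA).
exists r => //; split=> //; last by case/andP: ok_q.
by apply: contraTneq lt_eA => r0; rewrite EA r0 cats0 ltnn.
Qed.

Lemma wlabel_belast q qs e (X B : seq S) : walk_ok q (rcons qs e) ->
  vlab q ++ wpost (rcons qs e) = X ++ B -> size (epost e) < size B ->
  exists r, [/\ r != [::], walk_ok q qs & vlab q ++ wpost qs = X ++ r].
Proof.
rewrite -cats1 walk_ok_cat cats1 wpost_rcons catA => /andP[ok_qs _] E lt_eB.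
have le_X : size X <= size (vlab q ++ wpost qs).
  by move: (congr1 size E); rewrite !size_cat; lia.
have [r [Er EB]] := cat_eq_cat_leq (esym E) le_X.
exists r; split=> //; apply: contraTneq lt_eB => r0.
by rewrite EB r0 ltnn.
Qed.

Hypothesis NR : non_redundant G.

Lemma wlabel_infix_aligned q qs p ps (A B : seq S) :
  walk_ok q qs -> walk_ok p ps -> A != [::] -> B != [::] ->
  vlab q ++ wpost qs = A ++ (vlab p ++ wpost ps) ++ B ->
  (forall e qs', qs = e :: qs' -> size A <= size (epre e)) ->
  (forall qs' e, qs = rcons qs' e -> size B <= size (epost e)) ->
  exists as_ bs, [/\ qs = as_ ++ ps ++ bs, wend q as_ = p & wpre as_ = A].
Proof.
move=> ok_q ok_p A_neq0 B_neq0 E head_long last_long.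
have [as_ [bs [as_neq0 [bs_neq0 [Eqs end_as]]]]] : inner_subwalk p ps q qs.
  by apply: NR => //; exists A, B; rewrite !wlabelE.
have ok_as : walk_ok q as_ by move: ok_q; rewrite Eqs walk_ok_cat => /andP[].
have E' : wpre as_ ++ (vlab p ++ wpost ps) ++ wpost bs = A ++ (vlab p ++ wpost ps) ++ B.
  by rewrite -E Eqs !wpost_cat [in RHS]catA (wlabel_wpre ok_as) end_as -!catA.
have le_A : size A <= size (wpre as_).
  case: as_ as_neq0 Eqs {end_as E' ok_as} => // e as' _ Eqs.
  by apply: leq_trans (head_long _ _ Eqs) _; rewrite /wpre /= size_cat leq_addr.
have le_B : size B <= size (wpost bs).
  case/lastP: bs bs_neq0 Eqs {E'} => // bs' e _ Eqs.
  apply: leq_trans (last_long (as_ ++ ps ++ bs') e _) _; first by rewrite Eqs !rcons_cat.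
  by rewrite wpost_rcons size_cat leq_addl.
have [|<- _] := cat_eq_sizel E'; last by exists as_, bs.
by have := congr1 size E'; rewrite !size_cat; lia.
Qed.

(* By non-redundancy the walk [ps] occurs in [qs]; trimming first and last
   edges of [qs] that lie inside [A] and [B] makes this occurrence the given one. *)
Lemma wlabel_infix_subwalk q qs p ps (A B : seq S) :
  walk_ok q qs -> walk_ok p ps -> A != [::] -> B != [::] ->
  vlab q ++ wpost qs = A ++ (vlab p ++ wpost ps) ++ B ->
  exists as_ bs, [/\ qs = as_ ++ ps ++ bs, wend q as_ = p & wpre as_ = A].
Proof.
move=> + ok_p; have [n] := ubnP (size qs).
elim: n qs q A B => // n IH qs q A B lt_qs ok_q A_neq0 B_neq0 E.
have [[e [qs' [Eqs lt_eA]]] | head_long] :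
    (exists e qs', qs = e :: qs' /\ size (epre e) < size A) \/
    (forall e qs', qs = e :: qs' -> size A <= size (epre e)).
  case: qs {lt_qs ok_q E} => [|e qs']; first by right.
  case: (ltnP (size (epre e)) (size A)) => lt_eA; first by left; exists e, qs'.
  by right=> _ _ [<- _].
  rewrite {}Eqs in lt_qs ok_q E *.
  have [r EA [r_neq0 ok_qs' Er]] := wlabel_behead ok_q E lt_eA.
  have [as_ [bs [Eqs end_as pre_as]]] := IH qs' _ r B lt_qs ok_qs' r_neq0 B_neq0 Er.
  by exists (e :: as_), bs; rewrite Eqs /wpre /= -/(wpre as_) pre_as EA.
have [[qs' [e [Eqs lt_eB]]] | last_long] :
    (exists qs' e, qs = rcons qs' e /\ size (epost e) < size B) \/
    (forall qs' e, qs = rcons qs' e -> size B <= size (epost e)).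
  case/lastP: qs {lt_qs ok_q E head_long} => [|qs' e]; first by right=> -[].
  case: (ltnP (size (epost e)) (size B)) => lt_eB; first by left; exists qs', e.
  by right=> qs'' e' /eqP; rewrite eqseq_rcons => /andP[_ /eqP <-].
  rewrite {}Eqs size_rcons in lt_qs ok_q E *.
  have [r [r_neq0 ok_qs' Er]] := wlabel_belast ok_q (etrans E (catA _ _ _)) lt_eB.
  rewrite -catA in Er.
  have [as_ [bs [Eqs end_as pre_as]]] := IH qs' _ A r lt_qs ok_qs' A_neq0 r_neq0 Er.
  by exists as_, (rcons bs e); rewrite Eqs -!rcons_cat.
exact: wlabel_infix_aligned ok_q ok_p A_neq0 B_neq0 E head_long last_long.
Qed.

(* Both occurrences of [w], before and after [a], are aligned with occurrences
   of the walk [ps]; the edges from the first to the second form [D]. *)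
Lemma closed_walk_of_occurrence q qs p ps (A B a a' : seq S) :
  walk_ok q qs -> walk_ok p ps -> A != [::] -> B != [::] -> a != [::] ->
  (vlab p ++ wpost ps) ++ a = a' ++ (vlab p ++ wpost ps) ->
  vlab q ++ wpost qs = A ++ (vlab p ++ wpost ps) ++ a ++ B ->
  exists2 D, closed_walk p D & wpre D = a'.
Proof.
set w := vlab p ++ wpost ps => ok_q ok_p A_neq0 B_neq0 a_neq0 Ea E.
have a'_gt0 : 0 < size a' by rewrite (conj_size (esym Ea)) lt0n size_eq0.
have [as1 [bs1 [Eqs1 end1 pre1]]] :=
  wlabel_infix_subwalk ok_q ok_p A_neq0 (cat_neq0l B a_neq0) E.
have E' : vlab q ++ wpost qs = (A ++ a') ++ w ++ B.
  by rewrite E -catA; congr (_ ++ _); rewrite catA Ea -catA.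
have [as2 [bs2 [Eqs2 end2 pre2]]] :=
  wlabel_infix_subwalk ok_q ok_p (cat_neq0l a' A_neq0) B_neq0 E'.
case: (leqP (size as1) (size as2)) => [le12 | lt21]; last first.
  have [D [E1 _]] := cat_eq_cat_leq (etrans (esym Eqs2) Eqs1) (ltnW lt21).
  move: pre1; rewrite E1 wpre_cat pre2 => /(congr1 size); rewrite !size_cat.
  by move: a'_gt0; lia.
have [D [E2 _]] := cat_eq_cat_leq (etrans (esym Eqs1) Eqs2) le12.
have pre_D : wpre D = a' by apply: (@cat_injr _ A); rewrite -pre2 E2 wpre_cat pre1.
have ok_D : walk_ok q (as1 ++ D) by move: ok_q; rewrite Eqs2 E2 walk_ok_cat => /andP[].
exists D => //; split; first by apply: contraTneq a'_gt0 => D0; rewrite -pre_D D0.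
by move: ok_D end2; rewrite walk_ok_cat E2 wend_cat end1 => /andP[_ ok_D] end_D.
Qed.

Lemma cmem_of_occurrence q qs p ps (A B a a' : seq S) :
  walk_ok q qs -> walk_ok p ps -> A != [::] -> B != [::] -> a != [::] ->
  (vlab p ++ wpost ps) ++ a = a' ++ (vlab p ++ wpost ps) ->
  vlab q ++ wpost qs = A ++ (vlab p ++ wpost ps) ++ a ++ B ->
  cmem (CPC G) a.
Proof.
move=> ok_q ok_p A_neq0 B_neq0 a_neq0 Ea E.
have [D cl_D pre_D] := closed_walk_of_occurrence ok_q ok_p A_neq0 B_neq0 a_neq0 Ea E.
by apply: (cmem_closed_walk cl_D (z := vlab p ++ wpost ps)); rewrite ?pre_D ?Ea // lt0n size_eq0.
Qed.

Lemma closed_walk_of_cmem p ps (a a' : seq S) : walk_ok p ps -> a != [::] ->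
  (vlab p ++ wpost ps) ++ a = a' ++ (vlab p ++ wpost ps) -> cmem (CPC G) a ->
  exists2 D, closed_walk p D & wpre D = a'.
Proof.
move=> ok_p a_neq0 Ea Ca; have a_gt0 : 0 < size a by rewrite lt0n size_eq0.
have [g Eg] := catnS_suffix Ea a_gt0.
have [q [qs [A [B [ok_q A_neq0 B_neq0 E]]]]] := cmem_catn_inner (size (vlab p ++ wpost ps)).+1 Ca.
apply: (closed_walk_of_occurrence (A := A ++ g) ok_q ok_p _ B_neq0 a_neq0 Ea).
  exact: cat_neq0l.
by rewrite E Eg -!catA.
Qed.

Lemma conductor_wlabel p ps : walk_ok p ps -> conductor (CPC G) (wlabel p ps).
Proof.
move=> ok_p; rewrite wlabelE //; set w := vlab p ++ wpost ps.
move=> a b a_neq0 b_neq0 [a' Ea] [b' Eb].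
have Eab : w ++ a ++ b = (a' ++ b') ++ w by rewrite catA Ea -catA Eb catA.
split=> [Cab | [Ca Cb]].
  have ab_gt0 : 0 < size (a ++ b) by rewrite lt0n size_eq0 cat_neq0l.
  have [g Eg] := catnS_suffix Eab ab_gt0.
  have [q [qs [A [B [ok_q A_neq0 B_neq0 E]]]]] := cmem_catn_inner (size w).+1 Cab.
  rewrite Eg in E; split.
    apply: (cmem_of_occurrence (A := A ++ g) (B := b ++ B) ok_q ok_p) Ea _ => //.
    - exact: cat_neq0l.
    - exact: cat_neq0l.
    by rewrite E -!catA.
  have Egw : g ++ w ++ a ++ b = (g ++ a') ++ w ++ b by rewrite [w ++ _]catA Ea -!catA.
  apply: (cmem_of_occurrence (A := A ++ g ++ a') (B := B) ok_q ok_p) Eb _ => //.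
    exact: cat_neq0l.
  by rewrite E Egw -!catA.
have [D cl_D pre_D] := closed_walk_of_cmem ok_p a_neq0 Ea Ca.
have [D' cl_D' pre_D'] := closed_walk_of_cmem ok_p b_neq0 Eb Cb.
apply: (cmem_closed_walk (closed_walk_cat cl_D cl_D') (z := w)).
  by rewrite wpre_cat pre_D pre_D' Eab.
by rewrite lt0n size_eq0 cat_neq0l.
Qed.

Lemma conductor_long (s : seq S) : (forall v, exists e, gsrc e = v) ->
  max_edge_label G <= size s -> conductor (CPC G) s.
Proof.
move=> out_edge le_s.
have le_e e : size (elab e) <= size s.
  exact: leq_trans (leq_bigmax (F := fun e => size (elab e)) e) le_s.
have le_v v : size (vlab v) <= size s.
  by have [e <-] := out_edge v; apply: leq_trans (le_e e); rewrite elab_src size_cat leq_addr.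
case: (classic (substr_of (CPC G) s)) => [[c [Cc [i Es]]] | not_sub]; last first.
  exact: conductor_nosubstr.
have [q [qs [A [B [ok_q _ _ E]]]]] := CPC_substr_inner Cc Es.
have [v sub_v] := wlabel_infix_vlab ok_q E le_v le_e.
exact: conductor_infix (conductor_wlabel (isT : walk_ok v [::])) sub_v.
Qed.

End WalkLabels.

Theorem theorem5 (S : finType) (G : lgraph S) :
  assembly_graph G -> non_redundant G ->
  (forall v w : seq S, conductor (CPC G) v -> infix v w -> conductor (CPC G) w) /\
  (forall x : gV G, conductor (CPC G) (vlab x)) /\
  (forall e : gE G, conductor (CPC G) (elab e)) /\
  (forall (v : gV G) (es : seq (gE G)), walk_ok v es -> conductor (CPC G) (wlabel v es)) /\
  (forall s : seq S, ~ substr_of (CPC G) s -> conductor (CPC G) s) /\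
  (forall s : seq S, (max_edge_label G <= size s)%N -> conductor (CPC G) s).
Proof.
move=> [AG [cycle_at _]] NR.
have vlab_conductor (x : gV G) : conductor (CPC G) (vlab x).
  exact: (@conductor_wlabel _ _ AG NR x [::] isT).
have out_edge (v : gV G) : exists e, gsrc e = v.
  by have [[|e es] [//= _ [/andP[/eqP src_e _] _]]] := cycle_at v; exists e.
split; first exact: conductor_infix.
split; first exact: vlab_conductor.
split.
  move=> e; apply: conductor_infix (vlab_conductor (gsrc e)) _.
  by rewrite (elab_src AG e) prefix_infix.
split; first exact: conductor_wlabel.
split; first exact: conductor_nosubstr.
by move=> s; apply: conductor_long.
Qed.
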